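(* Let $A=(a_{ij})$ be column-stochastic and compatible with the strongly connected digraph $\mathcal G$ with parameter $\bar m$, let $(i^k,\mathbf d^k)$ satisfy the asynchrony model with constants $T,D$, and let $\widehat{\mathbf A}^k=\mathbf S^k\mathbf C^k\in\mathbb R^{S\times S}$ be the augmented matrices defined in the context. Then for all $k\in\mathbb N_0$: (a) $\widehat{\mathbf A}^k$ is column-stochastic; (b) every entry in the rows indexed by $\mathcal V$ (the computing agents) of $\widehat{\mathbf A}^{k+K_1-1:k}$ is at least $\eta=\bar m^{K_1}$, where $K_1=(2I-1)T+ID$.
   Context: $\mathcal G=(\mathcal V,\mathcal E)$, $\mathcal V=\{1,\dots,I\}$, strongly connected digraph without self-loops; $(j,i)\in\mathcal E$ means $j$ sends to $i$; $\mathcal N_i^{\rm in}=\{j:(j,i)\in\mathcal E\}$, $\mathcal N_i^{\rm out}=\{j:(i,j)\in\mathcal E\}$. Compatibility with parameter $\bar m\in(0,1)$: $a_{ii}\ge\bar m$, $a_{ij}\ge\bar m$ for $(j,i)\in\mathcal E$, $a_{ij}=0$ otherwise. Asynchrony model: $(i^k,\mathbf d^k)$, $i^k\in\mathcal V$, $\mathbf d^k=(d_j^k)_{j\in\mathcal N^{\rm in}_{i^k}}$, every agent appears among $i^k,\dots,i^{k+T-1}$ for all $k$, $0\le d_j^k\le D$. Counters: $\tau_{ij}^{-1}=-D$ for $(j,i)\in\mathcal E$; $\tau_{i^kj}^k=\max(\tau_{i^kj}^{k-1},k-d_j^k)$ for $j\in\mathcal N^{\rm in}_{i^k}$, and $\tau_{ij}^k=\tau_{ij}^{k-1}$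 for $i\ne i^k$. Augmented index set $\widehat{\mathcal V}=\mathcal V\cup\{(j,i)^d:(j,i)\in\mathcal E,\ d=0,\dots,D\}$ (virtual nodes), $S=|\widehat{\mathcal V}|=I+(D+1)|\mathcal E|$. Let $R^k=\{(j,i^k)^d: j\in\mathcal N^{\rm in}_{i^k},\ k-\tau^k_{i^kj}\le d\le D\}$. Sum matrix $\mathbf C^k$: $C^k_{hm}=1$ if $h=i^k$ and $m\in R^k$; $C^k_{hm}=1$ if $h=m\in\widehat{\mathcal V}\setminus R^k$; $0$ otherwise. Push matrix $\mathbf S^k$: $S^k_{(i^k,j)^0,\,i^k}=a_{ji^k}$ for $j\in\mathcal N^{\rm out}_{i^k}$; $S^k_{i^ki^k}=a_{i^ki^k}$; $S^k_{hh}=1$ for $h\in\mathcal V\setminus\{i^k\}$; $S^k_{(i,j)^{d+1},(i,j)^d}=1$ for $(i,j)\in\mathcal E$, $0\le d\le D-1$; $S^k_{(i,j)^D,(i,j)^D}=1$ for $(i,j)\in\mathcal E$; all other entries $0$. $\widehat{\mathbf A}^{k:t}=\widehat{\mathbf A}^k\cdots\widehat{\mathbf A}^t$ ($=\widehat{\mathbf A}^t$ if $k=t$). *)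

From HB Require Import structures.
From mathcomp Require Import all_boot all_order all_algebra.
Set Implicit Arguments. Unset Strict Implicit. Unset Printing Implicit Defensive.
Import Order.TTheory GRing.Theory Num.Theory.
Local Open Scope ring_scope.

Section Defs.
Variable R : realFieldType.

Definition col_stochastic (X : finType) (M : X -> X -> R) : Prop :=
  (forall h m, 0 <= M h m) /\ (forall m, \sum_(h : X) M h m = 1).

Definition mulF (X : finType) (M N : X -> X -> R) : X -> X -> R :=
  fun h m => \sum_(l : X) M h l * N l m.

Variables (I : nat) (E : rel 'I_I) (A : 'M[R]_I) (D : nat)
          (iseq : nat -> 'I_I) (dseq : nat -> 'I_I -> nat).

(* edges (j,i) with E j i : j sends to i *)
Definition edge := {p : 'I_I * 'I_I | E p.1 p.2}.

(* augmented index set: agents (inl i) and virtual nodes (inr (e, d)) = e^d *)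
Definition hatV : finType := ('I_I + (edge * 'I_D.+1))%type.

(* tau n i j = tau_{ij}^{n-1}; tau 0 i j = tau_{ij}^{-1} = -D *)
Fixpoint tau (n : nat) (i j : 'I_I) : int :=
  match n with
  | 0%N => - (D%:Z)
  | k.+1 => if (i == iseq k) && E j i
            then Order.max (tau k i j) (k%:Z - (dseq k j)%:Z)
            else tau k i j
  end.

Definition inRk (k : nat) (h : hatV) : bool :=
  match h with
  | inl _ => false
  | inr (e, d) => ((val e).2 == iseq k) &&
                  (k%:Z - tau k.+1 (iseq k) (val e).1 <= (d : nat)%:Z)
  end.

Definition Chat (k : nat) : hatV -> hatV -> R :=
  fun h m =>
    if (h == inl (iseq k)) && inRk k m then 1
    else if (h == m) && ~~ inRk k m then 1 else 0.

Definition Shat (k : nat) : hatV -> hatV -> R :=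
  fun h m =>
    match m with
    | inl i =>
        if i == iseq k then
          match h with
          | inl i' => if i' == i then A i i else 0
          | inr (e, d) => if ((val e).1 == i) && ((d : nat) == 0%N)
                          then A (val e).2 i else 0
          end
        else (if h == m then 1 else 0)
    | inr (e, d) =>
        if (d < D)%N then (if h == inr (e, inord (d.+1)) then 1 else 0)
        else (if h == m then 1 else 0)
    end.

Definition Ahat (k : nat) : hatV -> hatV -> R := mulF (Shat k) (Chat k).

(* Aprod t n = Ahat^{t+n : t} = Ahat^(t+n) * ... * Ahat^t *)
Fixpoint Aprod (t n : nat) : hatV -> hatV -> R :=
  match n with
  | 0%N => Ahat t
  | n'.+1 => mulF (Ahat (t + n)) (Aprod t n')
  end.

End Defs.

(* The sum matrix sends every virtual node of R^k to the active agent i^k and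
   fixes all other nodes, so each column of Ahat^k = S^k C^k is a column of the
   push matrix S^k; these are unit vectors, or the column of A for i^k spread
   over i^k itself and the first slots of its outgoing buffers.

   For the lower bound, follow a single route of mass along which every factor
   is at least mbar: an agent keeps its mass (weight a_ii), pushes it into the
   first slot of an outgoing buffer when it is active, the buffer shifts it one
   slot per step (weight 1), and the receiver collects it at the latest at its
   first activation after the mass reached slot D. Crossing an edge of G thus
   takes at most 2T + D steps, leaving a virtual node at most D + T, and a
   shortest path of G has at most I - 1 edges; (I - 1)(2T + D) + D + T = K1. *)

From Pilot Require Import Defs.
From HB Require Import structures.
From mathcomp Require Import all_boot all_order all_algebra.
From mathcomp Require Import zify.
Set Implicit Arguments. Unset Strict Implicit. Unset Printing Implicit Defensive.
Import Order.TTheory GRing.Theory Num.Theory.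
Local Open Scope ring_scope.

Section Pointer.
Variables (R : realFieldType) (X : finType).

Lemma sum_if_eq (c : X) (a : R) : \sum_(y : X) (if y == c then a else 0) = a.
Proof. by rewrite -big_mkcond big_pred1_eq. Qed.

Lemma mulF_pointer (M N : X -> X -> R) (f : X -> X) :
  (forall l m, N l m = (l == f m)%:R) -> forall h m, mulF M N h m = M h (f m).
Proof.
move=> Nf h m; rewrite /mulF (bigD1 (f m)) //= Nf eqxx mulr1 big1 ?addr0 //.
by move=> l /negbTE fl; rewrite Nf fl mulr0.
Qed.

Lemma col_stochastic_pointer (M N : X -> X -> R) (f : X -> X) :
  col_stochastic M -> (forall l m, N l m = (l == f m)%:R) ->
  col_stochastic (mulF M N).
Proof.
move=> [M_ge0 M_sum] /(mulF_pointer M) MN; split=> [h m | m]; first by rewrite MN.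
by under eq_bigr do rewrite MN.
Qed.

End Pointer.

Section ProductLowerBound.
Variables (R : realFieldType) (X : finType) (M : nat -> X -> X -> R) (eta : R).
Hypotheses (M_ge0 : forall t y z, 0 <= M t y z) (eta_ge0 : 0 <= eta).

Fixpoint mprod (k n : nat) : X -> X -> R :=
  if n is n'.+1 then mulF (M (k + n')) (mprod k n') else fun y x => (y == x)%:R.

Lemma mprod_ge0 k n y x : 0 <= mprod k n y x.
Proof.
elim: n y x => [|n IHn] y x /=; first exact: ler0n.
by apply: sumr_ge0 => l _; rewrite mulr_ge0.
Qed.

Definition reaches (k : nat) (x : X) (t : nat) (y : X) : Prop :=
  (k <= t)%N /\ eta ^+ (t - k) <= mprod k (t - k) y x.

Lemma reaches_refl k x : reaches k x k x.
Proof. by split=> //; rewrite subnn /= eqxx expr0. Qed.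

Lemma reaches_step k x t z y :
  reaches k x t z -> eta <= M t y z -> reaches k x t.+1 y.
Proof.
move=> [le_kt lb_z] lb_yz; split; first exact: leqW.
rewrite subSn //= subnKC // exprS /mulF (bigD1 z) //= -[X in X <= _]addr0.
apply: lerD; first by rewrite ler_pM ?exprn_ge0.
by apply: sumr_ge0 => l _; rewrite mulr_ge0 ?mprod_ge0.
Qed.

Lemma reaches_stay k x t t' y : (forall s, eta <= M s y y) ->
  reaches k x t y -> (t <= t')%N -> reaches k x t' y.
Proof.
move=> lb_yy reach_t /subnKC <-; elim: (t' - t)%N => [|n IHn]; first by rewrite addn0.
by rewrite addnS; apply: reaches_step IHn _.
Qed.

End ProductLowerBound.

Lemma connect_short_path (T : finType) (e : rel T) x y : connect e x y ->
  exists p, [/\ path e x p, last x p = y & (size p < #|T|)%N].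
Proof.
move=> /connectP [p e_p ->]; have [p' e_p' uniq_p' _] := shortenP e_p.
exists p'; split=> //.
by have := max_card (mem (x :: p')); rewrite (card_uniqP uniq_p').
Qed.

Section TimedReach.
Variables (T : finType) (e : rel T) (reached : nat -> T -> Prop) (L : nat).
Hypotheses (reached_mono : forall t t' y, reached t y -> (t <= t')%N -> reached t' y)
  (reached_edge : forall t x y, reached t x -> e x y ->
                  exists2 t', (t' <= t + L)%N & reached t' y).

Lemma reached_path p : forall x t, path e x p -> reached t x ->
  exists2 t', (t' <= t + size p * L)%N & reached t' (last x p).
Proof.
elim: p => [|y p IHp] x t /=; first by move=> _ reach_t; exists t; rewrite ?addn0.
move=> /andP [e_xy e_p] reach_t; have [t1 le_t1 reach_t1] := reached_edge reach_t e_xy.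
have [t2 le_t2 reach_t2] := IHp y t1 e_p reach_t1.
by exists t2 => //; lia.
Qed.

Lemma reached_connect t x y : connect e x y -> reached t x -> reached (t + #|T|.-1 * L) y.
Proof.
move=> /connect_short_path [p [e_p <- size_p]] /(reached_path e_p) [t' le_t' reach_t'].
apply: reached_mono reach_t' _; apply: (leq_trans le_t'); rewrite leq_add2l leq_mul2r.
by rewrite -ltnS (ltn_predK size_p) size_p orbT.
Qed.

End TimedReach.

Section AugmentedMatrices.
Variables (R : realFieldType) (I : nat) (E : rel 'I_I) (A : 'M[R]_I) (D : nat)
  (iseq : nat -> 'I_I) (dseq : nat -> 'I_I -> nat).

Local Notation V := (hatV E D).
Local Notation Shat := (@Shat R I E A D iseq).
Local Notation Chat := (@Chat R I E D iseq dseq).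
Local Notation Ahat := (@Ahat R I E A D iseq dseq).
Local Notation inRk := (@inRk I E D iseq dseq).

Definition collect k (z : V) : V := if inRk k z then inl (iseq k) else z.

Lemma Chat_pointer k l z : Chat k l z = (l == collect k z)%:R.
Proof. by rewrite /Defs.Chat /collect; case: (inRk k z); rewrite ?andbT ?andbF //; case: eqP. Qed.

Lemma Ahat_collect k y z : Ahat k y z = Shat k y (collect k z).
Proof. exact: (mulF_pointer (Shat k) (Chat_pointer k)). Qed.

Lemma sum_out_edges (F : 'I_I -> R) i :
  \sum_(e : edge E) (if (val e).1 == i then F (val e).2 else 0) =
  \sum_(j | E i j) F j.
Proof.
rewrite -(big_sub [pred p : 'I_I * 'I_I | E p.1 p.2] (fun p => if p.1 == i then F p.2 else 0)).
rewrite -(pair_big_dep xpredT (fun a b => E a b) (fun a b => if a == i then F b else 0)) /=.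
rewrite (bigD1 i) //= [X in _ + X]big1 => [|a /negbTE ai]; last first.
  by apply: big1 => b _; rewrite ai.
by rewrite addr0; apply: eq_bigr => j _; rewrite eqxx.
Qed.

Hypotheses (E_irr : forall i, ~~ E i i)
  (A_stoch : col_stochastic (fun i j => A i j))
  (A_supp : forall i j, i != j -> ~~ E j i -> A i j = 0).

Lemma A_ge0 i j : 0 <= A i j.
Proof. by case: A_stoch. Qed.

Lemma colsum_out_edges i : \sum_j A j i = A i i + \sum_(j | E i j) A j i.
Proof.
rewrite (bigD1 i) //=; congr (_ + _); rewrite big_mkcond [RHS]big_mkcond /=.
apply: eq_bigr => j _; case: (eqVneq j i) => [-> | ji]; first by rewrite (negbTE (E_irr i)).
by case: ifP => // /negbT nE_ij; rewrite A_supp.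
Qed.

Lemma Shat_ge0 k y z : 0 <= Shat k y z.
Proof.
rewrite /Defs.Shat; case: z => [i | [e d]]; last by case: ifP => _; case: ifP.
case: ifP => _; last by case: ifP.
by case: y => [i' | [e' d']]; case: ifP => // _; apply: A_ge0.
Qed.

Lemma Shat_colsum k z : \sum_(y : V) Shat k y z = 1.
Proof.
rewrite /Defs.Shat; case: z => [i | [e d]]; last by case: (d < D)%N; apply: sum_if_eq.
case: eqP => [ik | _]; last by apply: sum_if_eq.
rewrite big_sumType /= sum_if_eq (eq_bigr (fun v : edge E * 'I_D.+1 =>
  if ((val v.1).1 == i) && (v.2 == 0%N :> nat) then A (val v.1).2 i else 0)); last by case.
rewrite -(pair_big xpredT xpredT (fun (e : edge E) (d : 'I_D.+1) =>
  if ((val e).1 == i) && (d == 0%N :> nat) then A (val e).2 i else 0)) /=.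
have first_slot b (a : R) :
  \sum_(d < D.+1) (if b && (d == 0%N :> nat) then a else 0) = if b then a else 0.
  rewrite (bigD1 ord0) //= andbT big1 ?addr0 // => d d0.
  by rewrite (_ : (d == 0%N :> nat) = false) ?andbF //; exact: negbTE d0.
under eq_bigr => e _ do rewrite first_slot.
rewrite (sum_out_edges (fun j => A j i)) -colsum_out_edges.
by case: A_stoch => _ ->.
Qed.

Lemma Ahat_col_stochastic k : col_stochastic (Ahat k).
Proof. exact: col_stochastic_pointer (conj (Shat_ge0 k) (Shat_colsum k)) (Chat_pointer k). Qed.

Lemma Ahat_ge0 k y z : 0 <= Ahat k y z.
Proof. by case: (Ahat_col_stochastic k). Qed.

Lemma Aprod_mprod k n y x : @Aprod R I E A D iseq dseq k n y x = mprod Ahat k n.+1 y x.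
Proof.
elim: n y x => [|n IHn] y x /=; first by rewrite addn0 (mulF_pointer _ (f := id)).
by apply: eq_bigr => l _; rewrite IHn.
Qed.

Definition vnode (e : edge E) (n : nat) : V := inr (e, inord n).

Variables (mbar : R) (T : nat).
Hypotheses (E_conn : forall i j, connect E i j)
  (mbar_ge0 : 0 <= mbar) (mbar_le1 : mbar <= 1)
  (A_diag : forall i, mbar <= A i i)
  (A_edge : forall i j, E j i -> mbar <= A i j)
  (iseq_active : forall k i, exists t, (k <= t < k + T)%N /\ iseq t = i)
  (dseq_le : forall k j, E j (iseq k) -> (dseq k j <= D)%N).

Local Notation reaches := (reaches Ahat mbar).

Lemma Ahat_agent_diag t i : mbar <= Ahat t (inl i) (inl i).
Proof.
rewrite Ahat_collect /= /Defs.Shat.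
by case: ifP => _; rewrite eqxx; [exact: A_diag | exact: mbar_le1].
Qed.

Let step_Ahat := reaches_step Ahat_ge0 mbar_ge0.
Let stay_at_agent i k x t t' :
  reaches k x t (inl i) -> (t <= t')%N -> reaches k x t' (inl i) :=
  reaches_stay Ahat_ge0 mbar_ge0 (Ahat_agent_diag^~ i).

Lemma Ahat_send t j i (Eji : E j i) : iseq t = j ->
  mbar <= Ahat t (vnode (exist (fun p : 'I_I * 'I_I => E p.1 p.2) (j, i) Eji) 0) (inl j).
Proof.
move=> tj; rewrite Ahat_collect /= /Defs.Shat -tj eqxx /= inordK //= tj.
exact: A_edge.
Qed.

Lemma Ahat_shift t e n : (n <= D)%N -> ~~ inRk t (vnode e n) ->
  Ahat t (vnode e (minn n.+1 D)) (vnode e n) = 1.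
Proof.
move=> le_nD /negbTE nRk; rewrite Ahat_collect /collect nRk /Defs.Shat /vnode inordK ?ltnS //.
case: ltnP => [lt_nD | le_Dn]; first by rewrite (minn_idPl lt_nD) eqxx.
have -> : n = D by apply/eqP; rewrite eqn_leq le_nD.
by rewrite (minn_idPr (leqnSn D)) eqxx.
Qed.

Lemma Ahat_receive t e n : inRk t (vnode e n) ->
  mbar <= Ahat t (inl (val e).2) (vnode e n).
Proof.
move=> Rk; rewrite Ahat_collect /collect Rk.
move: Rk => /andP [/eqP recv _]; rewrite /Defs.Shat -recv !eqxx.
exact: A_diag.
Qed.

Lemma inRk_last t e : (val e).2 = iseq t -> inRk t (vnode e D).
Proof.
move=> recv; have Ee : E (val e).1 (iseq t) by rewrite -recv; exact: (valP e).
rewrite /Defs.inRk /vnode recv eqxx inordK //= eqxx Ee /= lerBlDr.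
apply: (@le_trans _ _ ((dseq t (val e).1)%:Z + (t%:Z - (dseq t (val e).1)%:Z))).
  by rewrite addrC subrK.
by rewrite lerD ?lez_nat ?dseq_le // le_max lexx orbT.
Qed.

Lemma reaches_buffer k x t e n : (n <= D)%N -> reaches k x t (vnode e n) ->
  forall s, (exists2 t', (t < t' <= t + s)%N & reaches k x t' (inl (val e).2)) \/
            reaches k x (t + s) (vnode e (minn (n + s) D)).
Proof.
move=> le_nD reach_n; elim=> [|s [[t' lt_t' reach_t'] | reach_s]].
- by right; rewrite !addn0 (minn_idPl le_nD).
- by left; exists t' => //; lia.
set m := minn (n + s) D in reach_s.
case Rk: (inRk (t + s) (vnode e m)).
  left; exists (t + s).+1; first lia.
  exact: step_Ahat reach_s (Ahat_receive Rk).
right; rewrite addnS (_ : minn (n + s.+1) D = minn m.+1 D); last by rewrite /m; lia.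
apply: (step_Ahat reach_s).
by rewrite Ahat_shift ?Rk ?geq_minr.
Qed.

Lemma reaches_from_buffer k x t e n : (n <= D)%N -> reaches k x t (vnode e n) ->
  exists2 t', (t < t' <= t + (D + T))%N & reaches k x t' (inl (val e).2).
Proof.
move=> le_nD reach_n; have [t0 [/andP [le_t0 lt_t0] active]] := iseq_active (t + D) (val e).2.
case: (reaches_buffer le_nD reach_n (t0 - t)) => [[t' lt_t' reach_t'] | reach_D].
  by exists t' => //; lia.
rewrite (_ : minn _ D = D) ?subnKC in reach_D; [| lia | lia].
exists t0.+1; first lia.
exact: step_Ahat reach_D (Ahat_receive (inRk_last (esym active))).
Qed.

Lemma reaches_edge k x t j i : reaches k x t (inl j) -> E j i ->
  exists2 t', (t' <= t + (2 * T + D))%N & reaches k x t' (inl i).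
Proof.
move=> reach_j Eji; have [t0 [/andP [le_t0 lt_t0] active]] := iseq_active t j.
have reach_t0 := stay_at_agent reach_j le_t0.
have reach_sent := step_Ahat reach_t0 (Ahat_send Eji active).
have [t' lt_t' reach_i] := reaches_from_buffer (leq0n D) reach_sent.
by exists t' => //; lia.
Qed.

Lemma reaches_all_agents k x t j : reaches k x t (inl j) ->
  forall i, reaches k x (t + I.-1 * (2 * T + D)) (inl i).
Proof.
move=> reach_j i; have stay t0 t1 y := @stay_at_agent y k x t0 t1.
by have := reached_connect stay (@reaches_edge k x) (E_conn j i) reach_j; rewrite card_ord.
Qed.

Lemma Aprod_agent_row_lb k i m :
  mbar ^+ ((2 * I - 1) * T + I * D) <=
  @Aprod R I E A D iseq dseq k ((2 * I - 1) * T + I * D - 1) (inl i) m.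
Proof.
set K1 := ((2 * I - 1) * T + I * D)%N.
have I_gt0 : (0 < I)%N by case: i => i' /= /(leq_ltn_trans _)->.
have T_gt0 : (0 < T)%N by have [t [/andP [? ?] _]] := iseq_active 0 i; lia.
have K1_gt0 : (0 < K1)%N by rewrite /K1; nia.
have budget : (I.-1 * (2 * T + D) + (D + T) = K1)%N by rewrite /K1; nia.
rewrite Aprod_mprod subn1 prednK //.
suff [_] : reaches k m (k + K1) (inl i) by rewrite addKn.
have [t le_t [j reach_j]] : exists2 t, (t + I.-1 * (2 * T + D) <= k + K1)%N &
    exists j, reaches k m t (inl j).
  case: m => [j | [e d]]; first by exists k; [lia | exists j; exact: reaches_refl].
  have reach_d : reaches k (inr (e, d)) k (vnode e d).
    by rewrite /vnode inord_val; exact: reaches_refl.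
  have [t lt_t reach_t] := reaches_from_buffer (leq_ord d) reach_d.
  by exists t; [lia | exists (val e).2].
exact: stay_at_agent (reaches_all_agents reach_j i) le_t.
Qed.

End AugmentedMatrices.

Theorem lemma3 (R : realFieldType) (I : nat) (E : rel 'I_I) (A : 'M[R]_I)
  (mbar : R) (T D : nat) (iseq : nat -> 'I_I) (dseq : nat -> 'I_I -> nat) :
  (forall i, ~~ E i i) ->
  (forall i j, connect E i j) ->
  col_stochastic (fun i j => A i j) ->
  0 < mbar < 1 ->
  (forall i, mbar <= A i i) ->
  (forall i j, E j i -> mbar <= A i j) ->
  (forall i j, i != j -> ~~ E j i -> A i j = 0) ->
  (forall k (i : 'I_I), exists t, (k <= t < k + T)%N /\ iseq t = i) ->
  (forall k j, E j (iseq k) -> (dseq k j <= D)%N) ->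
  forall k : nat,
    col_stochastic (@Ahat R I E A D iseq dseq k) /\
    (forall (i : 'I_I) (m : @hatV I E D),
       let K1 := ((2 * I - 1) * T + I * D)%N in
       mbar ^+ K1 <= @Aprod R I E A D iseq dseq k (K1 - 1) (inl i) m).
Proof.
move=> E_irr E_conn A_stoch /andP [mbar_gt0 mbar_lt1] A_diag A_edge A_supp
  iseq_active dseq_le k.
split; first exact: Ahat_col_stochastic.
move=> i m; exact: (Aprod_agent_row_lb E_irr A_stoch A_supp E_conn (ltW mbar_gt0)
  (ltW mbar_lt1) A_diag A_edge iseq_active dseq_le).
Qed.
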